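(* Every $\mathbb{G}$-predictable process $Y$ satisfies the global optional splitting formula at $\tau$ with respect to $\mathbb{F}$, i.e. there exist $Y'\in\mathcal{O}(\mathbb{F})$ and a $\mathcal{B}[0,\infty]\otimes\mathcal{O}(\mathbb{F})$-measurable function $Y''$ on $[0,\infty]\times(\mathbb{R}_+\times\Omega)$ with $Y=Y'\mathbf{1}_{[0,\tau)}+Y''(\tau)\mathbf{1}_{[\tau,\infty)}$.
   Context: Let $(\Omega,\mathcal{A},\mathbb{Q})$ be a probability space with a right-continuous filtration $\mathbb{F}=(\mathcal{F}_t)_{t\ge0}$ such that $\mathcal{F}_0$ contains $\mathcal{N}^{\mathcal{F}_\infty}$, where for a $\sigma$-algebra $\mathcal{T}\subset\mathcal{A}$, $\mathcal{N}^{\mathcal{T}}$ denotes the $\sigma$-algebra generated by all subsets of $\mathcal{T}$-measurable $\mathbb{Q}$-null sets. Let $\tau$ be a random variable with values in $[0,\infty]$, let $\mathcal{N}=\mathcal{N}^{\sigma(\tau)\vee\mathcal{F}_\infty}$, and let $\mathbb{G}=(\mathcal{G}_t)_{t\ge0}$ with $\mathcal{G}_t=\mathcal{N}\vee\bigcap_{s>t}(\mathcal{F}_s\vee\sigma(\tau\wedge s))$. Identities between processes are understood up to indistinguishability outside an $\mathcal{N}$-measurable $\mathbb{Q}$-null set. $Y''(\tau)$ denotes the process $(t,\omega)\mapsto Y''(\tau(\omega),t,\omega)$. *)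

From HB Require Import structures.
From mathcomp Require Import all_boot all_order all_algebra.
From mathcomp Require Import all_classical all_reals all_analysis measurable_realfun.
Set Implicit Arguments. Unset Strict Implicit. Unset Printing Implicit Defensive.
Import Order.TTheory GRing.Theory Num.Theory.
Import numFieldNormedType.Exports.
Local Open Scope classical_set_scope.
Local Open Scope ring_scope.

Section defs.
Context {R : realType} {d : measure_display} {Omega : measurableType d}.

(** A (real-valued) process is [Y : R -> Omega -> R]; only times [t >= 0]
    matter. The time-state space R_+ x Omega is the subset [RpO] of R * Omega. *)
Definition RpO : set (R * Omega) := [set p | 0 <= p.1].

Definition meas_wrt (G : set (set Omega)) (f : Omega -> R) : Prop :=
  forall B : set R, measurable B -> G (f @^-1` B).

Definition proc_preim (Y : R -> Omega -> R) (B : set R) : set (R * Omega) :=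
  RpO `&` [set p | B (Y p.1 p.2)].

Definition adapted (G : R -> set (set Omega)) (Y : R -> Omega -> R) : Prop :=
  forall t, 0 <= t -> meas_wrt (G t) (Y t).

Definition cadlag (Y : R -> Omega -> R) : Prop :=
  forall w, (forall t, 0 <= t -> (fun s => Y s w) @ t^'+ --> Y t w) /\
            (forall t, 0 < t -> cvg ((fun s => Y s w) @ t^'-)).

Definition leftcont (Y : R -> Omega -> R) : Prop :=
  forall w t, 0 < t -> (fun s => Y s w) @ t^'- --> Y t w.

Definition optional_sa (G : R -> set (set Omega)) : set (set (R * Omega)) :=
  <<s RpO, [set C | exists Y B, [/\ adapted G Y, cadlag Y, measurable B &
                                     C = proc_preim Y B]] >>.

Definition predictable_sa (G : R -> set (set Omega)) : set (set (R * Omega)) :=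
  <<s RpO, [set C | exists Y B, [/\ adapted G Y, leftcont Y, measurable B &
                                     C = proc_preim Y B]] >>.

Definition measurable_proc (S : set (set (R * Omega))) (Y : R -> Omega -> R) :=
  forall B : set R, measurable B -> S (proc_preim Y B).

Definition ERpRpO : set (\bar R * (R * Omega)) :=
  [set p | (0 <= p.1)%E /\ 0 <= p.2.1].

Definition borel_x_optional (G : R -> set (set Omega)) :
    set (set (\bar R * (R * Omega))) :=
  <<s ERpRpO, [set E | exists (B : set (\bar R)) C, [/\ measurable B, B `<=` [set x | (0 <= x)%E],
                                       optional_sa G C &
                                       E = [set p | B p.1 /\ C p.2]]] >>.

Definition measurable_param_proc (G : R -> set (set Omega))
    (Y'' : \bar R -> R -> Omega -> R) : Prop :=
  forall B : set R, measurable B ->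
    borel_x_optional G (ERpRpO `&` [set p | B (Y'' p.1 p.2.1 p.2.2)]).

Definition sigma_rv (f : Omega -> \bar R) : set (set Omega) :=
  <<s [set A | exists B : set (\bar R), measurable B /\ A = f @^-1` B] >>.

Definition join_sa (G1 G2 : set (set Omega)) : set (set Omega) := <<s G1 `|` G2>>.

Definition F_infty (F : R -> set (set Omega)) : set (set Omega) :=
  <<s [set A | exists t, 0 <= t /\ F t A] >>.

Definition null_sa (Q : set Omega -> \bar R) (T : set (set Omega)) : set (set Omega) :=
  <<s [set B | exists A, [/\ T A, Q A = 0%E & B `<=` A]] >>.

Definition enlarged (Q : set Omega -> \bar R) (F : R -> set (set Omega))
    (tau : Omega -> \bar R) (t : R) : set (set Omega) :=
  join_sa (null_sa Q (join_sa (sigma_rv tau) (F_infty F)))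
    [set A | forall s, t < s ->
       join_sa (F s) (sigma_rv (fun w => Order.min (tau w) s%:E)) A].

End defs.

(* On [{t < tau}] a [G]-predictable process only sees [F]-information, while
   on [{tau <= t}] it is a function of [tau] and of [F]-optional data.  Call a
   set or function "split" if, off a null set, it has this form.  Split sets
   form a sigma-algebra, and split functions are stable under pointwise
   limits.  The generators of [F s \/ sigma(tau /\ s)] split at level [s], and
   right-continuity of [F] brings the germ [\bigcap_(s > t)] down to [F t] on
   [{t < tau}].  A left-continuous [G]-adapted process is the limit of its
   values sampled at rational times just to the left, and each sampled piece
   splits; hence every predictable set, and every predictable process,
   splits. *)

From HB Require Import structures.
From mathcomp Require Import all_boot all_order all_algebra.
From mathcomp Require Import all_classical all_reals all_analysis measurable_realfun.
Import Order.TTheory GRing.Theory Num.Theory.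
Import numFieldNormedType.Exports.
From mathcomp Require Import lra.
Local Open Scope classical_set_scope.
Local Open Scope ring_scope.

Lemma measurable_fun_glue {d d'} {U : measurableType d} {V : measurableType d'}
    (kap : U -> nat) (g : nat -> U -> V) :
  (forall k, measurable [set z | kap z = k]) ->
  (forall k, measurable_fun setT (g k)) ->
  measurable_fun setT (fun z => g (kap z) z).
Proof.
move=> mk mg _ B mB; rewrite setTI.
rewrite (_ : _ @^-1` _ = \bigcup_k ([set z | kap z = k] `&` (g k @^-1` B))).
  apply: bigcupT_measurable => k; apply: measurableI => //.
  by rewrite -[X in measurable X]setTI; exact: mg.
by apply/seteqP; split => z /= => [h|[k _ [<-]]] //; exists (kap z).
Qed.

Lemma measurable_fun_asbool {d} {U : measurableType d} (C : set U) :
  measurable C -> measurable_fun setT (fun z => `[< C z >]).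
Proof.
move=> mC; apply: (measurable_fun_bool true).
by rewrite setTI (_ : _ @^-1` _ = C) //; apply/seteqP; split => z /= /asboolP.
Qed.

Lemma sigma_algebra_trace {U : Type} (D : set U) (G : set (set U)) :
  sigma_algebra D G -> sigma_algebra setT [set A | G (A `&` D)].
Proof.
move=> [G0 GC GU]; split => /=.
- by rewrite set0I.
- move=> A GA; rewrite (_ : _ `&` D = D `\` (A `&` D)); first exact: GC.
  apply/seteqP; split => x /=; first by move=> [[_ nA] Dx]; split => // -[].
  by move=> [Dx nAD]; split => //; split => // Ax; apply: nAD.
- by move=> A GA; rewrite setI_bigcupl; apply: GU.
Qed.

Lemma measurable_first {d} {U : measurableType d} (S : nat -> set U) k :
  (forall j, measurable (S j)) ->
  measurable [set z | S k z /\ forall j, (j < k)%N -> ~ S j z].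
Proof.
move=> mS.
rewrite (_ : [set z | _] = S k `&` \bigcap_j (if (j < k)%N then ~` S j else setT)).
  apply: measurableI => //; apply: bigcapT_measurable => j.
  by case: ifP => _ //; exact: measurableC.
apply/seteqP; split => z /= [Sk h]; split => // j; first by case: ifP => // jk _; exact: h.
by move=> jk; have := h j I; rewrite jk.
Qed.

Lemma lim_sup_set_iff {T} {A : (set T)^nat} {P : Prop} {x} M :
  (forall n, (M <= n)%N -> (P <-> A n x)) -> (P <-> lim_sup_set A x).
Proof.
move=> h; split => [p n _|/(_ M I) [n /= Mn /(h _ Mn)] //].
by exists (maxn n M); [exact: leq_maxl|apply/h => //; exact: leq_maxr].
Qed.

Lemma lim_sup_set_tail {T} (A : (set T)^nat) M :
  lim_sup_set A = \bigcap_(n >= M) \bigcup_(j >= n) A j.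
Proof.
apply/seteqP; split => x h n /= nM; first exact: h.
have [j /= Mj Aj] := h (maxn n M) (leq_maxr _ _).
by exists j => //; apply: leq_trans Mj; exact: leq_maxl.
Qed.

Section real_helpers.
Context {R : realType}.

(* An enumeration of the rationals inside [R]; the junk value [0] at codes
   of no rational is harmless since every rational has a code. *)
Definition ratn (k : nat) : R :=
  if @unpickle rat k is Some q then ratr q else 0.

Lemma ratn_pickle q : ratn (pickle q) = ratr q :> R.
Proof. by rewrite /ratn pickleK. Qed.

Lemma einfs0 (u : (\bar R)^nat) : einfs u 0 = ereal_inf (range u).
Proof.
rewrite /einfs /sdrop /=; congr ereal_inf.
by apply/seteqP; split => _ [k ? <-]; exists k.
Qed.

Lemma ereal_inf_ratn_gt (y : R) (u : (\bar R)^nat) :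
  (forall k, u k = if y < ratn k then (ratn k)%:E else +oo%E) ->
  ereal_inf (range u) = y%:E.
Proof.
move=> hu; apply/eqP; rewrite eq_le; apply/andP; split.
  apply/lee_addgt0Pr => e e0.
  have [q] := @rat_in_itvoo R y (y + e) (ltr_pwDr e0 (lexx y)).
  rewrite in_itv /= => /andP[yq qy].
  apply: (@le_trans _ _ (u (pickle q))); first by apply: ereal_inf_lbound; exists (pickle q).
  by rewrite hu ratn_pickle yq -EFinD lee_fin ltW.
apply/ereal_infP => _ [k _ <-]; rewrite hu.
by case: ifP => [/ltW|_]; rewrite ?lee_fin ?leey.
Qed.

Lemma meas_wrt_lt {d} {U : measurableType d} {G : set (set U)}
    {f : U -> R} r :
  meas_wrt G f -> G [set x | f x < r].
Proof.
move=> /(_ _ (measurable_itv `]-oo, r[)).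
by rewrite (_ : f @^-1` _ = [set x | f x < r]) //; apply/seteqP; split => x /=;
  rewrite in_itv.
Qed.

Definition eps (n : nat) : R := n.+1%:R^-1.

Lemma eps_gt0 n : 0 < eps n.
Proof. by rewrite /eps invr_gt0 ltr0Sn. Qed.

Lemma eps_small {e : R} : 0 < e ->
  exists M, forall n, (M <= n)%N -> eps n < e.
Proof.
move=> e0; exists (Num.truncn e^-1) => n Mn.
have h : e^-1 < n.+1%:R.
  by apply: lt_le_trans (real_truncnS_gt (num_real _)) _; rewrite ler_nat.
by rewrite /eps -(invrK e) ltf_pV2 ?posrE ?ltr0Sn ?invr_gt0.
Qed.

Lemma eps_eventually_lt {a : R} {x : \bar R} : (a%:E < x)%E ->
  exists M, forall n, (M <= n)%N -> ((a + eps n)%:E < x)%E.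
Proof.
case: x => [r| |] //=; last by move=> _; exists 0%N => n _; exact: ltey.
rewrite lte_fin -subr_gt0 => /eps_small[M hM]; exists M => n /hM.
by rewrite lte_fin ltrBrDl.
Qed.

Lemma emeasurable_ge (y : \bar R) : measurable [set x : \bar R | (y <= x)%E].
Proof.
rewrite (_ : [set x | _] = [set` `[y, +oo[]); first exact: emeasurable_itv.
by apply/seteqP; split => x /=; rewrite in_itv /= andbT.
Qed.

Lemma emeasurable_gt (y : \bar R) : measurable [set x : \bar R | (y < x)%E].
Proof.
rewrite (_ : [set x | _] = [set` `]y, +oo[]); first exact: emeasurable_itv.
by apply/seteqP; split => x /=; rewrite in_itv /= andbT.
Qed.

Definition grid_cell (n k : nat) : set R :=
  if k is k'.+1 then [set t | 0 < ratn k' /\ ratn k' <= t /\ t < ratn k' + eps n]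
  else [set t | t <= 0].

(* A time in [[0, q)] at distance at most [eps n] from the left end [q] of
   cell [k.+1]. *)
Definition grid_time (n k : nat) : R :=
  if k is k'.+1 then Order.max (ratn k' / 2) (ratn k' - eps n) else 0.

Lemma grid_cell_cover n t : exists k, `[< grid_cell n k t >].
Proof.
case: (leP t 0) => t0; first by exists 0%N; apply/asboolP.
have hm : Order.max 0 (t - eps n) < t.
  by rewrite gt_max t0 /= ltrBlDr ltrDl eps_gt0.
have [q] := @rat_in_itvoo R _ _ hm; rewrite in_itv /= => /andP[qm qt].
move: qm; rewrite gt_max => /andP[q0 qe].
by exists (pickle q).+1; apply/asboolP; rewrite /= ratn_pickle -ltrBlDr ltW.
Qed.

Definition cell n t := ex_minn (grid_cell_cover n t).

Lemma cellP n t : grid_cell n (cell n t) t.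
Proof. by rewrite /cell; case: ex_minnP => k /asboolP. Qed.

Lemma cell_setE n k : [set t | cell n t = k] =
  [set t | grid_cell n k t /\ forall j, (j < k)%N -> ~ grid_cell n j t].
Proof.
apply/seteqP; split => t /=; rewrite /cell; case: ex_minnP => m /asboolP gm mmin.
  by move=> <-; split => // j jm /asboolP /mmin; rewrite leqNgt jm.
move=> [gk kmin]; apply/eqP; rewrite eqn_leq mmin ?andbT; last exact/asboolP.
by rewrite leqNgt; apply/negP => /kmin.
Qed.

Lemma measurable_grid_cell n k : measurable (grid_cell n k).
Proof.
case: k => [|k] /=.
  rewrite (_ : [set t | _] = `]-oo, 0]%classic); first exact: measurable_itv.
  by apply/seteqP; split => t; rewrite /= in_itv.
case: (boolP (0 < ratn k)) => q0.
  rewrite (_ : [set t | _] = `[ratn k, ratn k + eps n[%classic); first exact: measurable_itv.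
  apply/seteqP; split => t; rewrite /= in_itv /=; first by move=> [_ [-> ->]].
  by move=> /andP[-> ->].
by rewrite (_ : [set t | _] = set0) //; apply/seteqP; split => t //= [/negP].
Qed.

Lemma measurable_cell_set n k : measurable [set t : R | cell n t = k].
Proof. rewrite cell_setE; apply: measurable_first => j; exact: measurable_grid_cell. Qed.

Lemma grid_time_ge0 n {k} : 0 < ratn k -> 0 <= grid_time n k.+1 :> R.
Proof. by move=> q0; rewrite /= le_max; apply/orP; left; rewrite divr_ge0 // ltW. Qed.

Lemma grid_time_lt n {k} : 0 < ratn k -> grid_time n k.+1 < ratn k :> R.
Proof.
move=> q0; rewrite /= gt_max ltr_pdivrMr // ltrBlDr ltrDl eps_gt0 andbT.
by rewrite ltr_pMr // ltr1n.
Qed.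

Lemma grid_time_dist n {t} : 0 < t ->
  grid_time n (cell n t) < t /\ t - grid_time n (cell n t) < eps n + eps n.
Proof.
have := cellP n t; case: (cell n t) => [tle|k [q0 [qt tq]]] t0.
  by move: t0; rewrite ltNge tle.
split; first exact: lt_le_trans (grid_time_lt n q0) qt.
have : ratn k - eps n <= grid_time n k.+1 by rewrite le_max lexx orbT.
by move: tq; set m := grid_time _ _; lra.
Qed.

Lemma cvg_grid_time (f : R -> R) {t} : 0 <= t -> (0 < t -> f @ t^'- --> f t) ->
  (fun n => f (grid_time n (cell n t))) @ \oo --> f t.
Proof.
rewrite le_eqVlt => /orP[/eqP <- _|t0 /(_ t0)].
  have c0 n : cell n 0 = 0%N.
    rewrite /cell; case: ex_minnP => m _ mmin.
    by apply/eqP; rewrite -leqn0 mmin //; apply/asboolP; rewrite /grid_cell /=.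
  rewrite (_ : (fun n => _) = fun _ => f 0); first exact: cvg_cst.
  by apply: funext => n; rewrite c0.
move/cvg_at_leftP; apply; split; first by move=> n; case: (grid_time_dist n t0).
apply/cvgrPdist_lt => e e0; have [M hM] := eps_small (divr_gt0 e0 (ltr0n R 2)).
near=> n; have [h1 h2] := grid_time_dist n t0.
rewrite ger0_norm; last by rewrite subr_ge0 ltW.
have : eps n < e / 2 by apply: hM; near: n; exact: nbhs_infty_ge.
by move: h2; set u := grid_time _ _; set v := eps n; lra.
Unshelve. all: by end_near.
Qed.
End real_helpers.

(** * Splitting along an event *)

(* Below, [p1] is the identity into the optional
   sets, [p2] is [x |-> (tau, x)] and [E] is [{t < tau}]. *)
Section split_along.
Context {R : realType} {T : Type} {d1 d2 : measure_display}
  {T1 : measurableType d1} {T2 : measurableType d2}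
  (p1 : T -> T1) (p2 : T -> T2) (E : T -> bool) (null : set (set T)).
Hypothesis null_bigcup : forall N : (set T)^nat, (forall n, null (N n)) ->
  exists M, null M /\ forall n, N n `<=` M.
Hypothesis null_ex : exists N, null N.

Definition split_set (S : set T) := exists C1 C2 N,
  [/\ measurable C1, measurable C2, null N &
   forall x, ~ N x -> (S x <-> (if E x then C1 (p1 x) else C2 (p2 x)))].

Definition split_fun_on (D : set T) (Y : T -> R) := exists Y1 Y2 N,
  [/\ measurable_fun setT Y1, measurable_fun setT Y2, null N &
   forall x, ~ N x -> D x -> Y x = if E x then Y1 (p1 x) else Y2 (p2 x)].

Definition split_fun := split_fun_on setT.

Let null_setU2 {N1 N2} : null N1 -> null N2 ->
  exists M, [/\ null M, N1 `<=` M & N2 `<=` M].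
Proof.
move=> h1 h2; have [|M [NM sM]] := null_bigcup (fun n => if n is 0%N then N1 else N2).
  by case.
by exists M; split => //; [exact: (sM 0%N) | exact: (sM 1%N)].
Qed.

Lemma split_set_seq (S : (set T)^nat) : (forall n, split_set (S n)) ->
  exists C1 C2 N, [/\ forall n, measurable (C1 n), forall n, measurable (C2 n), null N &
    forall n x, ~ N x -> (S n x <-> if E x then C1 n (p1 x) else C2 n (p2 x))].
Proof.
move=> hS.
have hex n : exists c : set T1 * set T2 * set T,
    [/\ measurable c.1.1, measurable c.1.2, null c.2 &
     forall x, ~ c.2 x -> (S n x <-> if E x then c.1.1 (p1 x) else c.1.2 (p2 x))].
  by have [C1 [C2 [N h]]] := hS n; exists (C1, C2, N).
have [f hf] := choice hex.
have nf n : null (f n).2 by case: (hf n).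
have [M [nM sM]] := null_bigcup _ nf.
exists (fun n => (f n).1.1), (fun n => (f n).1.2), M.
split => // [n|n|n x Mx]; case: (hf n) => // _ _ _; apply => /sM; exact.
Qed.

Lemma split_fun_on_seq (D : nat -> set T) (Y : nat -> T -> R) :
  (forall n, split_fun_on (D n) (Y n)) ->
  exists Y1 Y2 N, [/\ forall n, measurable_fun setT (Y1 n),
    forall n, measurable_fun setT (Y2 n), null N &
    forall n x, ~ N x -> D n x -> Y n x = if E x then Y1 n (p1 x) else Y2 n (p2 x)].
Proof.
move=> hY.
have hex n : exists c : (T1 -> R) * (T2 -> R) * set T,
    [/\ measurable_fun setT c.1.1, measurable_fun setT c.1.2, null c.2 &
     forall x, ~ c.2 x -> D n x -> Y n x = if E x then c.1.1 (p1 x) else c.1.2 (p2 x)].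
  by have [Y1 [Y2 [N h]]] := hY n; exists (Y1, Y2, N).
have [f hf] := choice hex.
have nf n : null (f n).2 by case: (hf n).
have [M [nM sM]] := null_bigcup _ nf.
exists (fun n => (f n).1.1), (fun n => (f n).1.2), M.
split => // [n|n|n x Mx]; case: (hf n) => // _ _ _; apply => /sM; exact.
Qed.

Lemma split_set_subnull S N : null N -> S `<=` N -> split_set S.
Proof.
move=> nN SN; exists set0, set0, N; split => // x Nx.
by split => [/SN //|]; case: (E x).
Qed.

Lemma split_set_ext S S' N : split_set S -> null N ->
  (forall x, ~ N x -> (S x <-> S' x)) -> split_set S'.
Proof.
move=> [C1 [C2 [N1 [m1 m2 n1 h]]]] nN hS.
have [M [nM s1 s2]] := null_setU2 n1 nN.
exists C1, C2, M; split => // x Mx.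
by rewrite -hS; [apply: h => /s1 | move=> /s2].
Qed.

Lemma split_set_sigma_algebra : sigma_algebra setT split_set.
Proof.
split.
- have [N nN] := null_ex; exists set0, set0, N; split => // x _.
  by case: (E x).
- move=> S [C1 [C2 [N [m1 m2 nN h]]]].
  exists (~` C1), (~` C2), N; split => //; try exact: measurableC.
  move=> x Nx; have := h x Nx; case: (E x) => /= hx.
    by split => [[_ nS] c|nc]; [apply: nS; apply/hx|split => // /hx].
  by split => [[_ nS] c|nc]; [apply: nS; apply/hx|split => // /hx].
- move=> S /split_set_seq[C1 [C2 [N [m1 m2 nN h]]]].
  exists (\bigcup_n C1 n), (\bigcup_n C2 n), N.
  split => //; try exact: bigcupT_measurable.
  move=> x Nx; have hx n := h n x Nx.
  by case: (E x) hx => hx; split => -[n _ /hx]; exists n.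
Qed.

Lemma split_fun_preimage Y B : split_fun Y -> measurable B -> split_set (Y @^-1` B).
Proof.
move=> [Y1 [Y2 [N [m1 m2 nN h]]]] mB.
exists (Y1 @^-1` B), (Y2 @^-1` B), N; split => //.
- by rewrite -[X in measurable X]setTI; exact: m1.
- by rewrite -[X in measurable X]setTI; exact: m2.
- by move=> x Nx /=; rewrite h //; case: (E x).
Qed.

(* [Y] is recovered as the infimum of the rationals above it. *)
Lemma split_fun_lt Y : (forall r, split_set [set x | Y x < r]) -> split_fun Y.
Proof.
move=> hY; have [C1 [C2 [N [m1 m2 nN h]]]] := split_set_seq _ (fun k => hY (ratn k)).
pose inf_above (U : Type) (C : nat -> set U) (z : U) : R :=
  fine (einfs (fun k => if `[< C k z >] then (ratn k)%:E else +oo%E) 0).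
have minf d (U : measurableType d) (C : nat -> set U) :
    (forall k, measurable (C k)) -> measurable_fun setT (inf_above _ C).
  move=> mC; apply: (measurableT_comp (@fine_measurable R setT measurableT)).
  apply: measurable_fun_einfs => k; apply: measurable_fun_ifT => //.
  exact: measurable_fun_asbool.
exists (inf_above _ C1), (inf_above _ C2), N; split => //; try exact: minf.
move=> x Nx _; have hk k := h k x Nx; rewrite /inf_above.
by case: (E x) hk => hk; rewrite einfs0 (@ereal_inf_ratn_gt _ (Y x)) // => k;
  rewrite -(asbool_equiv_eq (hk k)) asboolb.
Qed.

Lemma split_fun_cvg (Yn : nat -> T -> R) (Y : T -> R) N0 :
  (forall n, split_fun (Yn n)) -> null N0 ->
  (forall x, ~ N0 x -> Yn ^~ x @ \oo --> Y x) -> split_fun Y.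
Proof.
move=> /split_fun_on_seq[Y1 [Y2 [N [m1 m2 nN h]]]] nN0 hcv.
have [M [nM sN sN0]] := null_setU2 nN nN0.
pose esup_lim (U : Type) (f : nat -> U -> R) (z : U) : R :=
  fine (limn_esup (fun n => (f n z)%:E)).
have mlim d (U : measurableType d) (f : nat -> U -> R) :
    (forall n, measurable_fun setT (f n)) -> measurable_fun setT (esup_lim _ f).
  move=> mf; apply: (measurableT_comp (@fine_measurable R setT measurableT)).
  by apply: measurable_fun_limn_esup => n; apply/measurable_EFinP.
exists (esup_lim _ Y1), (esup_lim _ Y2), M; split => //; try exact: mlim.
move=> x Mx _; have hn n := h n x (fun Nx => Mx (sN _ Nx)) I.
have cx := hcv x (fun Nx => Mx (sN0 _ Nx)).
have cvE (f : nat -> R) : (forall n, Yn n x = f n) -> Y x = fine (limn_esup (EFin \o f)).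
  move=> /funext <-; have cv : (fun n => (Yn n x)%:E) @ \oo --> (Y x)%:E.
    by apply: cvg_EFin; [exact: nearW | exact: cx].
  by rewrite is_cvg_limn_esupE ?(cvg_lim _ cv) //; apply/cvg_ex; eexists; exact: cv.
by rewrite /esup_lim; case: (E x) hn => hn; exact: cvE.
Qed.

Lemma split_fun_glue (kap : T -> nat) (kap1 : T1 -> nat) (kap2 : T2 -> nat)
    (X : nat -> T -> R) :
  (forall x, kap1 (p1 x) = kap x) -> (forall x, kap2 (p2 x) = kap x) ->
  (forall k, measurable [set z | kap1 z = k]) ->
  (forall k, measurable [set z | kap2 z = k]) ->
  (forall k, split_fun_on [set x | kap x = k] (X k)) ->
  split_fun (fun x => X (kap x) x).
Proof.
move=> hk1 hk2 mk1 mk2 /split_fun_on_seq[Y1 [Y2 [N [m1 m2 nN h]]]].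
exists (fun z => Y1 (kap1 z) z), (fun z => Y2 (kap2 z) z), N.
split => //; try exact: measurable_fun_glue.
by move=> x Nx _; rewrite hk1 hk2; exact: h.
Qed.

End split_along.

Arguments split_fun_lt {R T d1 d2 T1 T2 p1 p2 E null} null_bigcup {Y}.
Arguments split_fun_cvg {R T d1 d2 T1 T2 p1 p2 E null}.
Arguments split_fun_glue {R T d1 d2 T1 T2 p1 p2 E null}.
Arguments split_set_ext {T d1 d2 T1 T2 p1 p2 E null}.
Arguments split_fun_preimage {R T d1 d2 T1 T2 p1 p2 E null Y B}.
Arguments split_set_subnull {T d1 d2 T1 T2 p1 p2 E null}.

(** * The progressively enlarged filtration *)

Section enlargement.
Context (R : realType) (d : measure_display) (Omega : measurableType d)
  (Q : probability Omega R) (F : R -> set (set Omega)) (tau : Omega -> \bar R).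
Hypotheses (HFsa : forall t, 0 <= t -> sigma_algebra setT (F t))
  (HFmeas : forall t, 0 <= t -> F t `<=` measurable)
  (HFincr : forall s t, 0 <= s -> s <= t -> F s `<=` F t)
  (HFright : forall t, 0 <= t -> F t = [set A | forall s, t < s -> F s A])
  (Htau_meas : measurable_fun setT tau)
  (Htau_ge0 : forall w, (0 <= tau w)%E).

Definition null_event (N : set Omega) :=
  join_sa (sigma_rv tau) (F_infty F) N /\ Q N = 0%E.

Lemma tau_F_infty_measurable : join_sa (sigma_rv tau) (F_infty F) `<=` measurable.
Proof.
apply: smallest_sub; first exact: sigma_algebra_measurable.
move=> A []; apply: smallest_sub; try exact: sigma_algebra_measurable.
  by move=> _ [B [mB ->]]; rewrite -[X in measurable X]setTI; exact: Htau_meas.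
by move=> A0 [t [t0 Ft]]; exact: (HFmeas _ t0).
Qed.

Lemma null_event0 : null_event set0.
Proof. by split; [exact: sigma_algebra0|exact: measure0]. Qed.

Lemma null_event_bigcup (N : (set Omega)^nat) : (forall n, null_event (N n)) ->
  exists M, null_event M /\ forall n, N n `<=` M.
Proof.
move=> hN; exists (\bigcup_n N n); split; last by move=> n x Nx; exists n.
have JN : join_sa (sigma_rv tau) (F_infty F) (\bigcup_n N n).
  by apply: sigma_algebra_bigcup => n; case: (hN n).
split => //; apply/eqP; rewrite eq_le measure_ge0 andbT.
have mN n : measurable (N n) by apply: tau_F_infty_measurable; case: (hN n).
have := @measure_sigma_subadditive _ _ _ Q (\bigcup_n N n) N mN
  (tau_F_infty_measurable _ JN) (@subset_refl _ _).
move/le_trans; apply.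
by rewrite eseries0 // => n _ _; case: (hN n).
Qed.

(* [FT a] and [BFT c] carry [F a] and [B(\bar R) (x) F c] as measurable types;
   [OptT] and [BOptT] carry [O(F)] and [B[0,oo] (x) O(F)], extended from the
   time domain [t >= 0] by trace. *)
Definition FT (a : R) := g_sigma_algebraType (F a).

Lemma measurable_FT {a} {A : set (FT a)} : 0 <= a -> measurable A <-> F a A.
Proof. by move=> a0; rewrite measurable_g_measurableTypeE //; exact: HFsa. Qed.

Lemma meas_wrtE {a} {f : Omega -> R} : 0 <= a ->
  meas_wrt (F a) f <-> measurable_fun (setT : set (FT a)) f.
Proof.
move=> a0; split => [mf _ B mB|mf B mB].
  by rewrite setTI; apply/(measurable_FT a0); exact: mf.
by apply/(measurable_FT a0); rewrite -[X in measurable X]setTI; exact: mf.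
Qed.

Lemma measurable_FT_mono {s t} {A : set Omega} : 0 <= s -> s <= t ->
  measurable (A : set (FT s)) -> measurable (A : set (FT t)).
Proof.
move=> s0 st /(measurable_FT s0) /(HFincr _ _ s0 st).
have t0 : 0 <= t := le_trans s0 st.
by move=> h; apply/(measurable_FT t0).
Qed.

Definition rectF (c : R) : set (set (\bar R * Omega)) :=
  [set W | exists B A, [/\ measurable B, F c A & W = B `*` A]].

Definition BFT (c : R) := g_sigma_algebraType (rectF c).

Definition split_at a c := split_set (fun w : Omega => w : FT a)
  (fun w => (tau w, w) : BFT c) (fun w => (a%:E < tau w)%E) null_event.

Lemma split_at_sigma_algebra a c : sigma_algebra setT (split_at a c).
Proof. exact: split_set_sigma_algebra null_event_bigcup (ex_intro _ _ null_event0). Qed.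

(* On [{s < tau}] the generators of [F s \/ sigma(tau /\ s)] are [F s]-sets,
   and on [{tau <= s}] they are read off the pair [(tau, w)]. *)
Lemma split_at_level {s S} : 0 <= s ->
  join_sa (F s) (sigma_rv (fun w => Order.min (tau w) s%:E)) S -> split_at s s S.
Proof.
move=> s0; apply: smallest_sub; first exact: split_at_sigma_algebra.
have FT_cst (P : Prop) : measurable ([set _ | P] : set (FT s)).
  case: (pselect P) => h.
    by rewrite (_ : [set _ | P] = setT) //; apply/seteqP; split.
  by rewrite (_ : [set _ | P] = set0) //; apply/seteqP; split.
move=> A [FA|].
  exists A, (setT `*` A), set0; split.
  - exact/(measurable_FT s0).
  - by apply: sub_sigma_algebra; exists setT, A; split.
  - exact: null_event0.
  - by move=> w _; case: ifP => _ //=; split => // -[].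
apply: smallest_sub; first exact: split_at_sigma_algebra.
move=> _ [B [mB ->]].
exists [set _ | B s%:E], ((fun u => Order.min u s%:E) @^-1` B `*` setT), set0.
split.
- exact: FT_cst.
- apply: sub_sigma_algebra; exists ((fun u => Order.min u s%:E) @^-1` B), setT.
  split => //; last exact/(measurable_FT s0).
  rewrite -[X in measurable X]setTI.
  by apply: measurable_mine => //; exact: measurable_cst.
- exact: null_event0.
- move=> w _ /=; case: ifP => h /=; last by split => [?|[]].
  by rewrite (_ : Order.min _ _ = s%:E) //; apply/min_idPr; apply: ltW.
Qed.

Lemma lim_sup_set_F a (A : (set Omega)^nat) : 0 <= a ->
  (forall n, F (a + eps n) (A n)) -> F a (lim_sup_set A).
Proof.
move=> a0 hA; rewrite (HFright _ a0) => s /[dup] as_ /ltW /(le_trans a0) s0.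
have [M hM] : exists M, forall n, (M <= n)%N -> eps n < s - a.
  by apply: eps_small; rewrite subr_gt0.
have an n : 0 <= a + eps n by rewrite addr_ge0 // ltW // eps_gt0.
apply/(measurable_FT s0); rewrite (lim_sup_set_tail _ M).
apply: bigcap_measurable => [|n /= Mn]; first by exists M => /=.
apply: bigcup_measurable => j /= nj; apply: (measurable_FT_mono (an j)).
  by rewrite -lerBrDl; apply/ltW/hM/(leq_trans Mn).
exact/(measurable_FT (an j)).
Qed.

Lemma split_at_germ {a c S} : 0 <= a -> a < c ->
  (forall s, a < s -> join_sa (F s) (sigma_rv (fun w => Order.min (tau w) s%:E)) S) ->
  split_at a c S.
Proof.
move=> a0 ac hS; have an n : 0 <= a + eps n by rewrite addr_ge0 // ltW // eps_gt0.
have hex n : exists C : set Omega * set Omega,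
    [/\ F (a + eps n) C.1, null_event C.2 &
     forall w, ~ C.2 w -> ((a + eps n)%:E < tau w)%E -> (S w <-> C.1 w)].
  have aan : a < a + eps n by rewrite ltrDl eps_gt0.
  have [C1 [C2 [N [m1 _ nN h]]]] := split_at_level (an n) (hS _ aan).
  exists (C1, N); split => //; first exact/(measurable_FT (an n)).
  by move=> w Nw hw; have := h w Nw; rewrite hw.
have [f hf] := choice hex.
have [C1c [C2 [Nc [_ mC2 nNc hc]]]] := split_at_level (le_trans a0 (ltW ac)) (hS _ ac).
have nf n : null_event (if n is n'.+1 then (f n').2 else Nc).
  by case: n => // n; case: (hf n).
have [M [nM sM]] := null_event_bigcup _ nf.
exists (lim_sup_set (fun n => (f n).1)), C2, M; split => //.
- by apply/(measurable_FT a0); apply: lim_sup_set_F => // n; case: (hf n).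
- move=> w Mw /=; case: ifP => aw.
    have [M0 hM0] := eps_eventually_lt aw.
    apply: (lim_sup_set_iff M0) => n /hM0 hn.
    by case: (hf n) => _ _; apply => // /(sM n.+1).
  have := hc w (fun h => Mw (sM 0%N _ h)); rewrite ifF //.
  by apply: contraFF aw => cw; apply: lt_trans cw; rewrite lte_fin.
Qed.

Lemma null_sa_sub (P : set (set Omega)) : sigma_algebra setT P ->
  (forall S N, null_event N -> S `<=` N -> P S) ->
  null_sa Q (join_sa (sigma_rv tau) (F_infty F)) `<=` P.
Proof. by move=> sP hP; apply: smallest_sub => // S [N [JN QN SN]]; exact: (hP S N). Qed.

Lemma enlarged_split_at {a c} : 0 <= a -> a < c -> enlarged Q F tau a `<=` split_at a c.
Proof.
move=> a0 ac; apply: smallest_sub; first exact: split_at_sigma_algebra.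
move=> A [|]; last exact: split_at_germ.
apply: null_sa_sub; first exact: split_at_sigma_algebra.
by move=> S N; exact: split_set_subnull.
Qed.

Lemma measurable_section_rectF c (W : set (\bar R * Omega)) u : 0 <= c ->
  <<s rectF c >> W -> measurable ([set w | W (u, w)] : set (FT c)).
Proof.
move=> c0; move: W; apply: smallest_sub.
  split => /=.
  - by rewrite (_ : [set w | set0 (u, w)] = set0).
  - move=> W mW; rewrite (_ : [set w | _] = setT `\` [set w | W (u, w)]) //.
    exact: measurableD.
  - by move=> W mW; exact: bigcupT_measurable.
move=> _ [B [A [mB FA ->]]] /=; case: (pselect (B u)) => h.
  by rewrite (_ : [set w | _] = A); [exact/(measurable_FT c0)|apply/seteqP; split => w //= []].
by rewrite (_ : [set w | _] = set0) //; apply/seteqP; split => w //= [].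
Qed.

Definition split_at0 := split_set (fun w : Omega => w : FT 0) (fun w : Omega => w : FT 0)
  (fun w => (0%:E < tau w)%E) null_event.

(* On [{tau = 0}] the germ is read off the sections at [0] of the sets
   provided at the levels [eps n]. *)
Lemma split_at0_germ S :
  (forall s, 0 < s -> join_sa (F s) (sigma_rv (fun w => Order.min (tau w) s%:E)) S) ->
  split_at0 S.
Proof.
move=> hS.
have hex n : exists C : set Omega * set Omega * set Omega,
    [/\ F 0 C.1.1, F (eps n) C.1.2, null_event C.2 &
     forall w, ~ C.2 w -> (S w <-> if (0%:E < tau w)%E then C.1.1 w else C.1.2 w)].
  have [C1 [C2 [N [m1 m2 nN h]]]] := split_at_germ (lexx 0) (eps_gt0 n) hS.
  have en : 0 <= eps n :> R by rewrite ltW // eps_gt0.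
  exists (C1, [set w | C2 (0%E, w)], N); split => //.
  - exact/(measurable_FT (lexx 0)).
  - by apply/(measurable_FT en) => /=; exact: measurable_section_rectF.
  move=> w Nw; rewrite h //; case: ifP => // tw.
  suff -> : tau w = 0%E by [].
  by apply/eqP; rewrite eq_le Htau_ge0 andbT leNgt tw.
have [f hf] := choice hex.
have nf n : null_event (f n).2 by case: (hf n).
have [M [nM sM]] := null_event_bigcup _ nf.
exists (f 0%N).1.1, (lim_sup_set (fun n => (f n).1.2)), M; split => //.
- by apply/(measurable_FT (lexx 0)); case: (hf 0%N).
- apply/(measurable_FT (lexx 0)); apply: lim_sup_set_F => // n.
  by rewrite add0r; case: (hf n).
move=> w Mw /=; have hn n := (let: And4 _ _ _ h := hf n in h) w (fun h => Mw (sM n w h)).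
case: ifP (hn 0%N) => // tw _; apply: (lim_sup_set_iff 0) => n _.
by have := hn n; rewrite tw.
Qed.

Lemma enlarged0_split_at0 : enlarged Q F tau 0 `<=` split_at0.
Proof.
have sa : sigma_algebra setT split_at0.
  exact: split_set_sigma_algebra null_event_bigcup (ex_intro _ _ null_event0).
apply: smallest_sub => // A [|]; last exact: split_at0_germ.
by apply: null_sa_sub => // S N; exact: split_set_subnull.
Qed.

(** * Optional processes *)

Definition OptT := g_sigma_algebraType [set A | optional_sa F (A `&` RpO)].

Lemma measurable_OptT {A : set OptT} : measurable A <-> optional_sa F (A `&` RpO).
Proof.
rewrite measurable_g_measurableTypeE //.
exact: sigma_algebra_trace (smallest_sigma_algebra _ _).
Qed.

Definition BOptT := g_sigma_algebraType [set A | borel_x_optional F (A `&` ERpRpO)].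

Lemma measurable_BOptT {A : set BOptT} :
  measurable A <-> borel_x_optional F (A `&` ERpRpO).
Proof.
rewrite measurable_g_measurableTypeE //.
exact: sigma_algebra_trace (smallest_sigma_algebra _ _).
Qed.

Lemma measurable_param_BOptT (Y2 : BOptT -> R) : measurable_fun setT Y2 ->
  measurable_param_proc F (fun u t w => Y2 (u, (t, w))).
Proof.
move=> mY2 B mB; have := mY2 measurableT B mB; rewrite setTI => /measurable_BOptT.
rewrite setIC; congr (borel_x_optional F (_ `&` _)).
by apply/seteqP; split => -[u [t w]].
Qed.

Lemma measurable_OptT_proc (Y : R -> Omega -> R) : measurable_proc (optional_sa F) Y ->
  measurable_fun (setT : set OptT) (fun z => Y z.1 z.2).
Proof. by move=> mY _ B mB; rewrite setTI; apply/measurable_OptT; rewrite setIC; exact: mY. Qed.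

Lemma optional_proc_OptT (Y1 : OptT -> R) : measurable_fun setT Y1 ->
  measurable_proc (optional_sa F) (fun t w => Y1 (t, w)).
Proof.
move=> mY B mB; have := mY measurableT B mB; rewrite setTI => /measurable_OptT.
by rewrite setIC; congr (optional_sa F (_ `&` _)); apply/seteqP; split => -[t w].
Qed.

Definition step (c : R) (A : Omega -> R) (t : R) (w : Omega) : R :=
  if c <= t then A w else 0.

Lemma optional_step {c A} : 0 <= c -> meas_wrt (F c) A ->
  measurable_proc (optional_sa F) (step c A).
Proof.
move=> c0 mA B mB; apply: sub_sigma_algebra; exists (step c A), B; split => //.
- move=> t t0; rewrite /step; case: (leP c t) => ct.
    by move=> B' mB'; exact: HFincr _ _ c0 ct _ (mA _ mB').
  by apply/(meas_wrtE t0); exact: measurable_cst.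
- move=> w; split.
  + move=> t t0; apply: cvg_near_cst; rewrite /step; case: (leP c t) => ct.
      near=> s; rewrite ifT //; apply: (le_trans ct); apply: ltW.
      by near: s; exact: nbhs_right_gt.
    near=> s; rewrite ifF //; apply/negbTE; rewrite -ltNge.
    by near: s; exact: nbhs_right_lt.
  + move=> t t0; apply/cvg_ex; rewrite /step; case: (ltP c t) => ct.
      exists (A w); apply: cvg_near_cst; near=> s; rewrite ifT //; apply: ltW.
      by near: s; exact: nbhs_left_gt.
    exists 0; apply: cvg_near_cst; near=> s; rewrite ifF //; apply/negbTE.
    rewrite -ltNge; apply: (lt_le_trans _ ct).
    by near: s; exact: nbhs_left_lt.
Unshelve. all: by end_near.
Qed.

Lemma measurable_OptT_step_set c A : 0 <= c -> F c A ->
  measurable [set z : OptT | c <= z.1 /\ A z.2].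
Proof.
move=> c0 FA; have mA : measurable (A : set (FT c)) by exact/(measurable_FT c0).
have mind : measurable_fun (setT : set (FT c)) (\1_A : _ -> R).
  exact: measurable_indic.
have /measurable_OptT_proc/(_ measurableT [set 1] (measurable_set1 1)) :=
  optional_step c0 ((meas_wrtE c0).2 mind).
rewrite setTI; congr measurable; apply/seteqP; split => -[t w] /=; rewrite /step.
  case: ifP => ct; last by move/eqP; rewrite eq_sym oner_eq0.
  rewrite indicE; case: (boolP (w \in A)) => [/set_mem Aw _|_ /eqP] //.
  by rewrite eq_sym oner_eq0.
by move=> [-> Aw]; rewrite indicE mem_set.
Qed.

Lemma measurable_OptT_time : measurable_fun (setT : set OptT) (fun z => z.1).
Proof.
apply: (measurability (@RGenCInfty.G R)); first exact: RGenCInfty.measurableE.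
move=> _ [_ [c ->] <-]; rewrite setTI.
rewrite (_ : _ @^-1` _ = [set z : OptT | c <= z.1]); last first.
  by apply/seteqP; split => z /=; rewrite in_itv /= andbT.
have [c0|c0] := leP 0 c.
  rewrite (_ : [set z | _] = [set z : OptT | c <= z.1 /\ setT z.2]).
    by apply: measurable_OptT_step_set => //; apply/(measurable_FT c0).
  by apply/seteqP; split => z /= => [|[]].
apply/measurable_OptT; rewrite (_ : _ `&` RpO = setT `&` RpO).
  by apply/measurable_OptT.
apply/seteqP; split => z [cz z0] //; split => //.
by apply: le_trans (ltW c0) (z0 : 0 <= z.1).
Qed.

Lemma measurable_BOptT_snd : measurable_fun (setT : set BOptT) (fun p => p.2 : OptT).
Proof.
move=> _ A /measurable_OptT mA; rewrite setTI; apply/measurable_BOptT.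
apply: sub_sigma_algebra; exists [set x | (0 <= x)%E], (A `&` RpO).
split => //; first exact: emeasurable_ge.
by apply/seteqP; split => -[u [t w]] /= => [[Au [u0 t0]]|[u0 [Au t0]]].
Qed.

Lemma measurable_BOptT_fst_gt (a : R) : measurable [set p : BOptT | (a%:E < p.1)%E].
Proof.
apply/measurable_BOptT; apply: sub_sigma_algebra.
exists [set x | (a%:E < x)%E /\ (0 <= x)%E], RpO; split => //.
- by apply: measurableI; [exact: emeasurable_gt|exact: emeasurable_ge].
- by move=> x [].
- by have /measurable_OptT := @measurableT _ OptT; rewrite setTI.
- by apply/seteqP; split => -[u [t w]] /= => [[au [u0 t0]]|[[au u0] t0]].
Qed.

Lemma measurable_OptT_time_set {B : set R} : measurable B ->
  measurable [set z : OptT | B z.1].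
Proof. by move=> mB; have := measurable_OptT_time measurableT B mB; rewrite setTI. Qed.

Lemma measurable_BOptT_time_ge c : measurable [set p : BOptT | c <= p.2.1].
Proof.
have h1 := @measurable_OptT_time_set `[c, +oo[%classic (measurable_itv _).
have := measurable_BOptT_snd measurableT _ h1.
rewrite setTI; congr measurable.
by apply/seteqP; split => p /=; rewrite in_itv /= andbT.
Qed.

Lemma measurable_rect_after c W : 0 <= c -> <<s rectF c >> W ->
  measurable [set p : BOptT | c <= p.2.1 /\ W (p.1, p.2.2)].
Proof.
have mc := measurable_BOptT_time_ge c.
pose after (W : set (\bar R * Omega)) := [set p : BOptT | c <= p.2.1 /\ W (p.1, p.2.2)].
move=> c0; move: W; apply: (@smallest_sub _ _ _ [set W | measurable (after W)]).
  split => /=.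
  - by rewrite (_ : after set0 = set0) //; apply/seteqP; split => p // [].
  - move=> W mW; rewrite (_ : after _ = [set p : BOptT | c <= p.2.1] `\` after W).
      exact: measurableD.
    apply/seteqP; split => p /=; first by move=> [cp [_ nW]]; split => // -[].
    by move=> [cp nW]; split => //; split => // Wp; apply: nW.
  - move=> W mW; rewrite (_ : after _ = \bigcup_n after (W n)).
      exact: bigcupT_measurable.
    apply/seteqP; split => p /=; first by move=> [cp [n _ Wn]]; exists n.
    by move=> [n _ [cp Wn]]; split => //; exists n.
move=> _ [B [A [mB FA ->]]] /=; apply/measurable_BOptT; apply: sub_sigma_algebra.
exists (B `&` [set x | (0 <= x)%E]), ([set z | c <= z.1 /\ A z.2] `&` RpO); split.
- by apply: measurableI => //; exact: emeasurable_ge.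
- by move=> x [].
- by apply/measurable_OptT; exact: measurable_OptT_step_set.
- by apply/seteqP; split => -[u [t w]] /= => [[[ct [Bu Aw]] [u0 t0]]|[[Bu u0] [[ct Aw] t0]]].
Qed.

Lemma measurable_fun_after c (h : BFT c -> R) : 0 <= c -> measurable_fun setT h ->
  measurable_fun (setT : set BOptT) (fun p => if c <= p.2.1 then h (p.1, p.2.2) else 0).
Proof.
move=> c0 mh _ V mV; rewrite setTI.
rewrite (_ : _ @^-1` V = [set p : BOptT | c <= p.2.1 /\ (h @^-1` V) (p.1, p.2.2)] `|`
   (~` [set p : BOptT | c <= p.2.1] `&` [set _ | V 0])).
  apply: measurableU.
    by apply: measurable_rect_after => //; have := mh measurableT V mV; rewrite setTI.
  apply: measurableI; first by apply: measurableC; exact: measurable_BOptT_time_ge.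
  case: (pselect (V 0)) => h0.
    by rewrite (_ : [set _ | V 0] = setT) //; apply/seteqP; split.
  by rewrite (_ : [set _ | V 0] = set0) //; apply/seteqP; split.
apply/seteqP; split => p /=; case: ifP => cp.
- by move=> hV; left.
- by move=> hV; right; split => // /negbT; rewrite cp.
- by case => [[]//|[]].
- by case => [[]|[]]; rewrite ?cp.
Qed.

(** * Splitting of predictable processes *)

(* Negative times are exceptional: the processes are only constrained on
   [t >= 0]. *)
Definition null_path (X : set (R * Omega)) :=
  exists N, null_event N /\ X = [set x | x.1 < 0 \/ N x.2].

Lemma null_path_bigcup (X : (set (R * Omega))^nat) : (forall n, null_path (X n)) ->
  exists M, null_path M /\ forall n, X n `<=` M.
Proof.
move=> hX; have [f hf] := choice hX.
have [M [nM sM]] := null_event_bigcup _ (fun n => (hf n).1).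
exists [set x | x.1 < 0 \/ M x.2]; split; first by exists M.
by move=> n x; rewrite (hf n).2 /= => -[|/sM]; [left|right].
Qed.

Lemma null_path0 : null_path [set x | x.1 < 0].
Proof.
exists set0; split; first exact: null_event0.
by apply/seteqP; split => x /= => [|[]//]; left.
Qed.

Definition path_fst (x : R * Omega) : OptT := x.
Definition path_snd (x : R * Omega) : BOptT := (tau x.2, x).
Definition before_tau (x : R * Omega) : bool := (x.1%:E < tau x.2)%E.

Definition split_path_set := split_set path_fst path_snd before_tau null_path.
Definition split_path_fun_on (D : set (R * Omega)) (Y : R * Omega -> R) :=
  split_fun_on path_fst path_snd before_tau null_path D Y.

Lemma split_path_enlarged {a c} {X : Omega -> R} : 0 <= a -> a < c ->
  meas_wrt (enlarged Q F tau a) X ->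
  split_path_fun_on [set x | c <= x.1] (fun x => X x.2).
Proof.
move=> a0 ac mX; have c0 : 0 <= c by exact: le_trans a0 (ltW ac).
have [A [h [N [mA mh nN hX]]]] := split_fun_lt null_event_bigcup
  (fun r => enlarged_split_at a0 ac _ (meas_wrt_lt r mX)).
have mAc : meas_wrt (F c) A.
  by move=> B mB; apply: (HFincr _ _ a0 (ltW ac)); exact: (meas_wrtE a0).2 mA B mB.
pose Y1 (z : OptT) := step c A z.1 z.2.
have mY1 : measurable_fun setT Y1 by apply: measurable_OptT_proc; exact: optional_step.
exists Y1, (fun p : BOptT => if (a%:E < p.1)%E then Y1 p.2
                            else if c <= p.2.1 then h (p.1, p.2.2) else 0),
  [set x | x.1 < 0 \/ N x.2]; split => //.
- apply: measurable_fun_ifT => //.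
  + apply: (measurable_fun_bool true); rewrite setTI.
    exact: measurable_BOptT_fst_gt.
  + exact: measurableT_comp mY1 measurable_BOptT_snd.
  + exact: measurable_fun_after.
- by exists N.
move=> [t w] /= Nx ct; have Nw : ~ N w by move=> Nw; apply: Nx; right.
rewrite /before_tau /path_fst /path_snd /= hX // /Y1 /step /= ct; case: (boolP (t%:E < tau w)%E) => tw.
  by rewrite (le_lt_trans _ tw) // lee_fin (le_trans (ltW ac) ct).
by case: ifP => //; rewrite ct.
Qed.

Lemma split_path_enlarged0 {X : Omega -> R} : meas_wrt (enlarged Q F tau 0) X ->
  split_path_fun_on [set x | x.1 <= 0] (fun x => X x.2).
Proof.
move=> mX; have [A [A0 [N [mA mA0 nN hX]]]] := split_fun_lt null_event_bigcup
  (fun r => enlarged0_split_at0 _ (meas_wrt_lt r mX)).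
have step0 (B : FT 0 -> R) : measurable_fun setT B ->
    measurable_fun (setT : set OptT) (fun z => step 0 B z.1 z.2).
  by move=> mB; apply: measurable_OptT_proc; exact: optional_step (lexx 0) ((meas_wrtE (lexx 0)).2 mB).
exists (fun z => step 0 A z.1 z.2), ((fun z => step 0 A0 z.1 z.2) \o (fun p : BOptT => p.2)),
  [set x | x.1 < 0 \/ N x.2]; split.
- exact: step0.
- exact: measurableT_comp (step0 _ mA0) measurable_BOptT_snd.
- by exists N.
move=> [t w] /= Nx t0; have Nw : ~ N w by move=> Nw; apply: Nx; right.
have -> : t = 0 by apply/eqP; rewrite eq_le t0 leNgt; apply/negP => tn; apply: Nx; left.
by rewrite /before_tau /path_fst /path_snd /step /= lexx hX.
Qed.

Lemma split_path_grid {Z : R -> Omega -> R} n : adapted (enlarged Q F tau) Z ->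
  split_path_fun_on setT (fun x => Z (grid_time n (cell n x.1)) x.2).
Proof.
move=> hZ; apply: (split_fun_glue null_path_bigcup (fun x => cell n x.1)
  (fun z : OptT => cell n z.1) (fun p : BOptT => cell n p.2.1)
  (fun k x => Z (grid_time n k) x.2)) => //.
- by move=> k; exact: (measurable_OptT_time_set (measurable_cell_set n k)).
- move=> k; have := measurable_BOptT_snd measurableT _
    (measurable_OptT_time_set (measurable_cell_set n k)).
  by rewrite setTI.
case=> [|k].
  have [Y1 [Y2 [N [m1 m2 nN h]]]] := split_path_enlarged0 (hZ 0 (lexx 0)).
  exists Y1, Y2, N; split => // x Nx /= kx; apply: h => //=.
  by have := cellP n x.1; rewrite kx.
case: (boolP (0 < @ratn R k)) => q0; last first.
  exists (fun _ => 0), (fun _ => 0), [set x | x.1 < 0]; split; try exact: measurable_cst.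
    exact: null_path0.
  by move=> x _ /= kx; have := cellP n x.1; rewrite kx => -[q0' _]; rewrite q0' in q0.
have [Y1 [Y2 [N [m1 m2 nN h]]]] :=
  split_path_enlarged (grid_time_ge0 n q0) (grid_time_lt n q0) (hZ _ (grid_time_ge0 n q0)).
exists Y1, Y2, N; split => // x Nx /= kx; apply: h => //=.
by have := cellP n x.1; rewrite kx => -[_ []].
Qed.

Lemma split_path_leftcont {Z : R -> Omega -> R} : adapted (enlarged Q F tau) Z ->
  leftcont Z -> split_path_fun_on setT (fun x => Z x.1 x.2).
Proof.
move=> hZ hl; apply: (split_fun_cvg null_path_bigcup
  (fun n x => Z (grid_time n (cell n x.1)) x.2) _ _ (fun n => split_path_grid n hZ) null_path0).
move=> [t w] /= /negP; rewrite -leNgt => t0.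
by apply: (cvg_grid_time (fun s => Z s w) t0) => t_gt0; exact: hl.
Qed.

Lemma split_path_set_ext {S S'} : split_path_set S ->
  (forall x, 0 <= x.1 -> (S x <-> S' x)) -> split_path_set S'.
Proof.
move=> hS h; apply: (split_set_ext null_path_bigcup _ _ _ hS null_path0) => x /negP.
by rewrite -leNgt; exact: h.
Qed.

Lemma predictable_split_path : predictable_sa (enlarged Q F tau) `<=` split_path_set.
Proof.
apply: smallest_sub.
  have [S0 SC SU] : sigma_algebra setT split_path_set :=
    split_set_sigma_algebra _ _ _ _ null_path_bigcup (ex_intro _ _ null_path0).
  split => // A /SC hA; apply: (split_path_set_ext hA) => x x0 /=.
  by split => -[_ nA].
move=> _ [Z [B [hZ hl mB ->]]].
apply: (split_path_set_ext (split_fun_preimage (split_path_leftcont hZ hl) mB)).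
by move=> [t w] /= t0; split => [h|[]//]; split.
Qed.

Lemma split_path_predictable (Y : R -> Omega -> R) :
  measurable_proc (predictable_sa (enlarged Q F tau)) Y ->
  split_path_fun_on setT (fun x => Y x.1 x.2).
Proof.
move=> HY; apply: (split_fun_lt null_path_bigcup) => r.
apply: (split_path_set_ext (predictable_split_path _ (HY _ (measurable_itv `]-oo, r[)))).
by move=> [t w] /= t0; rewrite /proc_preim /= in_itv /=; split => [[]|].
Qed.

End enlargement.

Arguments optional_proc_OptT {R d Omega F Y1}.
Arguments split_path_predictable {R d Omega Q F tau} HFsa HFmeas HFincr HFright Htau_meas Htau_ge0 {Y}.

Theorem mainTheorem3 (R : realType) (d : measure_display) (Omega : measurableType d)
  (Q : probability Omega R) (F : R -> set (set Omega)) (tau : Omega -> \bar R)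
  (HFsa : forall t, 0 <= t -> sigma_algebra setT (F t))
  (HFmeas : forall t, 0 <= t -> F t `<=` measurable)
  (HFincr : forall s t, 0 <= s -> s <= t -> F s `<=` F t)
  (HFright : forall t, 0 <= t -> F t = [set A | forall s, t < s -> F s A])
  (HF0 : null_sa Q (F_infty F) `<=` F 0)
  (Htau_meas : measurable_fun setT tau)
  (Htau_ge0 : forall w, (0 <= tau w)%E)
  (Y : R -> Omega -> R)
  (HY : measurable_proc (predictable_sa (enlarged Q F tau)) Y) :
  exists (Y' : R -> Omega -> R) (Y'' : \bar R -> R -> Omega -> R),
    [/\ measurable_proc (optional_sa F) Y',
        measurable_param_proc F Y'' &
        exists N0 : set Omega,
          [/\ join_sa (sigma_rv tau) (F_infty F) N0, Q N0 = 0%E &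
              forall w, ~ N0 w -> forall t, 0 <= t ->
                Y t w = Y' t w * (if (t%:E < tau w)%E then 1 else 0)
                        + Y'' (tau w) t w * (if (tau w <= t%:E)%E then 1 else 0)]].
Proof.
have [Y1 [Y2 [N [mY1 mY2 [N0 [[JN0 QN0] ->]] hY]]]] :=
  split_path_predictable HFsa HFmeas HFincr HFright Htau_meas Htau_ge0 HY.
exists (fun t w => Y1 (t, w)), (fun u t w => Y2 (u, (t, w))); split.
- exact: optional_proc_OptT.
- exact: measurable_param_BOptT.
exists N0; split => // w N0w t t0.
rewrite (hY (t, w)) //=; last by move=> [|//]; rewrite ltNge t0.
by rewrite /before_tau /= leNgt; case: ltP => _; rewrite ?mulr1 ?mulr0 ?addr0 ?add0r.
Qed.
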